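(* Let $k$ be a field, $V$ a $k$-vector space, $\varphi\in\operatorname{End}_k(V)$ a finite potent endomorphism with index $i(\varphi)=r$ and AST-decomposition $V=W_\varphi\oplus U_\varphi$. Then an endomorphism $\psi\in\operatorname{End}_k(V)$ is a G-Drazin inverse of $\varphi$ if and only if $W_\varphi$ and $U_\varphi$ are invariant under $\psi$, $\psi|_{W_\varphi}=(\varphi|_{W_\varphi})^{-1}$, and $\psi|_{U_\varphi}$ is a generalized inverse of $\varphi|_{U_\varphi}$.
   Context: An endomorphism $\varphi$ of a $k$-vector space $V$ is finite potent if $\varphi^n(V)$ is finite dimensional for some $n$. For such $\varphi$, the AST-decomposition is $V=U_\varphi\oplus W_\varphi$ where $U_\varphi=\{v\in V: \varphi^m(v)=0 \text{ for some } m\}$ and $W_\varphi=\{v\in V: p(\varphi)(v)=0 \text{ for some } p(x)\in k[x] \text{ coprime to } x\}$; both are $\varphi$-invariant, $\varphi|_{U_\varphi}$ is nilpotent, $W_\varphi$ is finite dimensional and $\varphi|_{W_\varphi}$ is an automorphism. The index $i(\varphi)$ is the nilpotency order of $\varphi|_{U_\varphi}$. An endomorphism $\psi\in\operatorname{End}_k(V)$ is a G-Drazin inverse of $\varphi$ if $\varphi\circ\psi\circ\varphi=\varphi$ and $\psi\circ\varphi^{r}=\varphi^{r}\circ\psi$, where $r=i(\varphi)$. A generalized inverse of an endomorphism $g$ of a vector space $U$ is an endomorphism $g^-$ of $U$ with $g\circ g^-\circ g=g$. *)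

From HB Require Import structures.
From mathcomp Require Import all_boot all_order all_algebra.
Set Implicit Arguments. Unset Strict Implicit. Unset Printing Implicit Defensive.
Import GRing.Theory.
Local Open Scope ring_scope.

Section Defs.
Variables (k : fieldType) (V : lmodType k).

Definition finite_dimensional (S : V -> Prop) : Prop :=
  exists s : seq V, forall v, S v ->
    exists c : 'I_(size s) -> k, v = \sum_(i < size s) c i *: s`_i.

Definition image (f : V -> V) : V -> Prop := fun v => exists x, v = f x.

Definition finite_potent (phi : {linear V -> V}) : Prop :=
  exists n : nat, finite_dimensional (image (iter n phi)).

Definition poly_endo (p : {poly k}) (phi : V -> V) (v : V) : V :=
  \sum_(i < size p) p`_i *: iter i phi v.

Definition U_ (phi : {linear V -> V}) : V -> Prop :=
  fun v => exists m : nat, iter m phi v = 0.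

Definition W_ (phi : {linear V -> V}) : V -> Prop :=
  fun v => exists p : {poly k}, coprimep p 'X /\ poly_endo p phi v = 0.

Definition is_index (phi : {linear V -> V}) (r : nat) : Prop :=
  (forall u, U_ phi u -> iter r phi u = 0) /\
  (forall r' : nat, (forall u, U_ phi u -> iter r' phi u = 0) -> (r <= r')%N).

Definition G_Drazin_inverse (phi psi : {linear V -> V}) (r : nat) : Prop :=
  (forall v, phi (psi (phi v)) = phi v) /\
  (forall v, psi (iter r phi v) = iter r phi (psi v)).

Definition stable_under (f : {linear V -> V}) (S : V -> Prop) : Prop :=
  forall v, S v -> S (f v).

End Defs.

From HB Require Import structures.
From mathcomp Require Import all_boot all_order all_algebra.

(* Evaluating polynomials at [phi] turns a coprime factorisation of an
   annihilating polynomial into a splitting of the vector (Bezout).  Finite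
   potency gives every vector a nonzero annihilating polynomial [X^m q] with
   [q(0) <> 0], hence [V = U_phi + W_phi]; [X] is coprime to the annihilators of
   vectors of [W_phi], so [phi] is bijective on [W_phi], and [W_phi = phi^r(V)].
   A G-Drazin inverse [psi] commutes with [phi^r], so it preserves
   [phi^r(V) = W_phi] and [U_phi = ker phi^r]; on [W_phi], [phi psi phi = phi]
   with [phi] invertible forces [psi = phi^-1].  Conversely both defining
   identities of a G-Drazin inverse are checked separately on [U_phi] and
   [W_phi]. *)

Set Implicit Arguments. Unset Strict Implicit.
Import GRing.Theory.
Local Open Scope ring_scope.

Lemma left_kernel_nontrivial (F : fieldType) m n (C : 'M[F]_(m, n)) :
  (n < m)%N -> exists2 a : 'rV_m, a != 0 & a *m C = 0.
Proof.
move=> lt_nm; have /rowV0Pn[a /sub_kermxP aC0 a_neq0] : kermx C != 0.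
  by rewrite kermx_eq0 -row_leq_rank -ltnNge (leq_ltn_trans (rank_leq_col C)).
by exists a.
Qed.

Section PolyEndo.
Variables (k : fieldType) (V : lmodType k).

Lemma iter_is_linear (f : {linear V -> V}) n : linear (iter n f).
Proof. by elim: n => [|n IH] a x y //=; rewrite IH linearP. Qed.

HB.instance Definition _ (f : {linear V -> V}) n :=
  GRing.isLinear.Build k V V *:%R (iter n f) (iter_is_linear f n).

Lemma poly_endo_is_linear p (f : {linear V -> V}) : linear (poly_endo p f).
Proof.
move=> a x y; rewrite /poly_endo scaler_sumr -big_split /=.
by apply: eq_bigr => i _; rewrite linearP scalerDr !scalerA mulrC.
Qed.

HB.instance Definition _ p (f : {linear V -> V}) :=
  GRing.isLinear.Build k V V *:%R (poly_endo p f) (poly_endo_is_linear p f).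

Variable phi : {linear V -> V}.
Implicit Types (p q : {poly k}) (v w x y : V).

Lemma poly_endo_widen p n v : (size p <= n)%N ->
  poly_endo p phi v = \sum_(i < n) p`_i *: iter i phi v.
Proof.
move=> le_p_n; rewrite /poly_endo.
rewrite (big_ord_widen n (fun i => p`_i *: iter i phi v) le_p_n) big_mkcond /=.
apply: eq_bigr => i _.
by case: ltnP => // le_p_i; rewrite nth_default // scale0r.
Qed.

Lemma poly_endoD p q v :
  poly_endo (p + q) phi v = poly_endo p phi v + poly_endo q phi v.
Proof.
pose n := maxn (size p) (size q).
rewrite !(@poly_endo_widen _ n) ?leq_maxl ?leq_maxr //; last first.
  exact: leq_trans (size_polyD _ _) _.
by rewrite -big_split; apply: eq_bigr => i _; rewrite coefD scalerDl.
Qed.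

Lemma poly_endoZ c p v : poly_endo (c *: p) phi v = c *: poly_endo p phi v.
Proof.
rewrite (@poly_endo_widen _ (size p)) ?size_scale_leq // scaler_sumr.
by apply: eq_bigr => i _; rewrite coefZ scalerA.
Qed.

Lemma poly_endo0 v : poly_endo 0 phi v = 0.
Proof. by rewrite /poly_endo size_poly0 big_ord0. Qed.

Lemma poly_endoC c v : poly_endo c%:P phi v = c *: v.
Proof.
by rewrite (@poly_endo_widen _ 1) ?size_polyC ?leq_b1 // big_ord1 coefC.
Qed.

Lemma poly_endo1 v : poly_endo 1 phi v = v.
Proof. by rewrite -polyC1 poly_endoC scale1r. Qed.

Lemma phi_poly_endo p v : phi (poly_endo p phi v) = poly_endo p phi (phi v).
Proof.
rewrite linear_sum; apply: eq_bigr => i _.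
by rewrite linearZ /= -iterS iterSr.
Qed.

Lemma poly_endoMX p v : poly_endo (p * 'X) phi v = poly_endo p phi (phi v).
Proof.
rewrite (@poly_endo_widen _ (size p).+1); last first.
  by rewrite (leq_trans (size_polyMleq _ _)) // size_polyX addn2.
rewrite big_ord_recl coefMX eqxx scale0r add0r.
by apply: eq_bigr => i _; rewrite coefMX /= add0n -iterS iterSr.
Qed.

Lemma poly_endoX v : poly_endo 'X phi v = phi v.
Proof. by rewrite -['X]mul1r poly_endoMX poly_endo1. Qed.

Lemma poly_endoM p q v :
  poly_endo (p * q) phi v = poly_endo p phi (poly_endo q phi v).
Proof.
elim/poly_ind: p v => [|p c IH] v; first by rewrite mul0r !poly_endo0.
rewrite mulrDl -mulrA (mulrC 'X) mulrA mul_polyC !poly_endoD !poly_endoMX.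
by rewrite IH poly_endoZ poly_endoC phi_poly_endo.
Qed.

Lemma poly_endo_comm p q v :
  poly_endo p phi (poly_endo q phi v) = poly_endo q phi (poly_endo p phi v).
Proof. by rewrite -!poly_endoM mulrC. Qed.

Lemma poly_endoXn n v : poly_endo 'X^n phi v = iter n phi v.
Proof.
elim: n v => [|n IH] v; first by rewrite expr0 poly_endo1.
by rewrite exprSr poly_endoMX IH iterSr.
Qed.

Lemma poly_endo_coprime_ker p q v : coprimep p q ->
  poly_endo p phi v = 0 -> poly_endo q phi v = 0 -> v = 0.
Proof.
move=> /Bezout_eq1_coprimepP[[a b] /= Eab] pv0 qv0.
by rewrite -[v]poly_endo1 -Eab poly_endoD !poly_endoM pv0 qv0 !linear0 addr0.
Qed.

Lemma poly_endo_coprime_split p q v : coprimep p q ->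
  poly_endo (p * q) phi v = 0 ->
  exists v1 v2,
    [/\ poly_endo p phi v1 = 0, poly_endo q phi v2 = 0 & v = v1 + v2].
Proof.
move=> /Bezout_eq1_coprimepP[[a b] /= Eab] pqv0.
exists (poly_endo (b * q) phi v), (poly_endo (a * p) phi v); split.
- by rewrite -poly_endoM mulrCA poly_endoM pqv0 linear0.
- by rewrite -poly_endoM mulrCA (mulrC q) poly_endoM pqv0 linear0.
- by rewrite -poly_endoD addrC Eab poly_endo1.
Qed.

Lemma W_poly_endo q w : W_ phi w -> W_ phi (poly_endo q phi w).
Proof. by case=> p [cop pw0]; exists p; rewrite poly_endo_comm pw0 linear0. Qed.

Lemma W_iter n w : W_ phi w -> W_ phi (iter n phi w).
Proof. by rewrite -poly_endoXn; apply: W_poly_endo. Qed.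

Lemma W_B x y : W_ phi x -> W_ phi y -> W_ phi (x - y).
Proof.
case=> p [cop_p px0] [q [cop_q qy0]]; exists (p * q).
rewrite coprimepMl cop_p cop_q; split=> //.
by rewrite linearB /= {1}mulrC !poly_endoM px0 qy0 !linear0 addr0.
Qed.

Lemma W_ker y : W_ phi y -> phi y = 0 -> y = 0.
Proof.
case=> p [cop py0] phiy0; apply: (poly_endo_coprime_ker cop py0).
by rewrite poly_endoX.
Qed.

Lemma W_surj w : W_ phi w -> exists2 x, W_ phi x & phi x = w.
Proof.
move=> Ww; case: (Ww) => p [/Bezout_eq1_coprimepP[[a b] /= Eab] pw0].
exists (poly_endo b phi w); first exact: W_poly_endo.
by rewrite -[RHS]poly_endo1 -Eab poly_endoD poly_endoM pw0 linear0 add0r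
  poly_endoMX phi_poly_endo.
Qed.

Lemma W_surj_iter n w : W_ phi w -> exists2 x, W_ phi x & iter n phi x = w.
Proof.
elim: n w => [|n IH] w Ww; first by exists w.
have [x1 Wx1 <-] := W_surj Ww; have [x Wx <-] := IH _ Wx1.
by exists x; rewrite // iterSr -iterS.
Qed.

Lemma finite_dimensional_orbit_annihilated S w :
  finite_dimensional S -> (forall j, S (iter j phi w)) ->
  exists2 q : {poly k}, q != 0 & poly_endo q phi w = 0.
Proof.
(* The [m.+1] vectors [phi^j w], [j <= m], of the span of [s] are linearly
   dependent; the coefficients of a dependence form the polynomial. *)
case=> s span_s S_orbit; set m := size s.
have /fin_all_exists[c Ec] (j : 'I_m.+1) :
    exists c : 'I_m -> k, iter j phi w = \sum_i c i *: s`_i by exact: span_s.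
have [a a_neq0 aC0] := left_kernel_nontrivial (\matrix_(j, i) c j i) (ltnSn m).
exists (rVpoly a).
  apply: contraNneq a_neq0 => /(congr1 (@poly_rV _ m.+1)).
  by rewrite rVpolyK linear0 => ->.
rewrite (poly_endo_widen _ (size_poly _ _)).
under eq_bigr => j _ do rewrite coef_rVpoly_ord Ec scaler_sumr.
rewrite exchange_big big1 //= => i _.
have aCi0 : \sum_j a 0 j * c j i = 0.
  by have /matrixP/(_ 0 i) := aC0; rewrite !mxE; under eq_bigr do rewrite mxE.
under eq_bigr => j _ do rewrite scalerA.
by rewrite -scaler_suml aCi0 scale0r.
Qed.

Lemma finite_potent_annihilated v : finite_potent phi ->
  exists2 p : {poly k}, p != 0 & poly_endo p phi v = 0.
Proof.
case=> n fd_img.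
have [|q q_neq0 qv0] :=
  finite_dimensional_orbit_annihilated (w := iter n phi v) fd_img.
  by move=> j; exists (iter j phi v); rewrite -!iterD addnC.
exists (q * 'X^n); first by rewrite mulf_neq0 // expf_neq0 // polyX_eq0.
by rewrite poly_endoM poly_endoXn.
Qed.

Lemma annihilated_decomposition p v : p != 0 -> poly_endo p phi v = 0 ->
  exists u w, [/\ U_ phi u, W_ phi w & v = u + w].
Proof.
move=> p_neq0; have [m [q]] := multiplicity_XsubC p 0.
rewrite p_neq0 subr0 mulrC /= => q0_neq0 -> pv0.
have cop_q : coprimep q 'X by rewrite coprimepX.
have cop_Xm_q : coprimep 'X^m q by rewrite coprimep_sym coprimep_expr.
have [u [w [Xm_u0 qw0 ->]]] := poly_endo_coprime_split cop_Xm_q pv0.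
by exists u, w; split; [exists m; rewrite -poly_endoXn | exists q |].
Qed.

Lemma finite_potent_decomposition v : finite_potent phi ->
  exists u w, [/\ U_ phi u, W_ phi w & v = u + w].
Proof.
by case/(finite_potent_annihilated v) => p; apply: annihilated_decomposition.
Qed.

End PolyEndo.

Lemma iter_commute_on (T : Type) (f g : T -> T) (S : T -> Prop) :
  (forall x, S x -> S (f x)) -> (forall x, S x -> g (f x) = f (g x)) ->
  forall n x, S x -> g (iter n f x) = iter n f (g x).
Proof.
move=> Sf gfC; elim=> [|n IH] x Sx //=.
by rewrite gfC ?IH //; elim: n {IH} => //= n IH; apply: Sf.
Qed.

Section Index.
Variables (k : fieldType) (V : lmodType k) (phi : {linear V -> V}) (r : nat).
Hypotheses (phi_fp : finite_potent phi) (phi_index : is_index phi r).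

Lemma iter_index_U u : U_ phi u -> iter r phi u = 0.
Proof. exact: phi_index.1. Qed.

Lemma W_image_iter_index v : W_ phi v <-> exists x, v = iter r phi x.
Proof.
split=> [/(W_surj_iter r)[x _ <-] | [x ->]]; first by exists x.
have [u [w [Uu Ww ->]]] := finite_potent_decomposition x phi_fp.
by rewrite linearD /= iter_index_U // add0r; apply: W_iter.
Qed.

Section GDrazin.
Variable psi : {linear V -> V}.

Lemma G_Drazin_stable_W :
  G_Drazin_inverse phi psi r -> stable_under psi (W_ phi).
Proof.
case=> _ psi_iterC w /W_image_iter_index[x ->].
by apply/W_image_iter_index; exists (psi x); apply: psi_iterC.
Qed.

Lemma G_Drazin_stable_U :
  G_Drazin_inverse phi psi r -> stable_under psi (U_ phi).
Proof.
by case=> _ psi_iterC u Uu; exists r; rewrite -psi_iterC iter_index_U ?linear0.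
Qed.

Lemma G_Drazin_inverse_W : G_Drazin_inverse phi psi r ->
  forall w, W_ phi w -> phi (psi w) = w /\ psi (phi w) = w.
Proof.
move=> GD w Ww; have [x Wx <-] := W_surj Ww; split; first exact: GD.1.
have Wphix : W_ phi (phi x) := W_iter 1 Wx.
apply: subr0_eq; apply: W_ker.
  apply: (W_B _ Wphix); apply: (G_Drazin_stable_W GD).
  exact: (W_iter 1 Wphix).
by rewrite linearB /= GD.1 subrr.
Qed.

Lemma G_Drazin_inverse_from_restrictions :
  stable_under psi (U_ phi) ->
  (forall w, W_ phi w -> phi (psi w) = w /\ psi (phi w) = w) ->
  (forall u, U_ phi u -> phi (psi (phi u)) = phi u) ->
  G_Drazin_inverse phi psi r.
Proof.
move=> psi_U psi_W psi_ginvU; split=> v;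
  have [u [w [Uu Ww ->]]] := finite_potent_decomposition v phi_fp.
- by rewrite !linearD /= psi_ginvU // (psi_W _ Ww).2.
- rewrite !linearD /= (iter_index_U Uu) (iter_index_U (psi_U _ Uu)).
  rewrite linear0 !add0r; apply: (iter_commute_on (S := W_ phi)) => // [x|x Wx].
    exact: (W_iter 1).
  by rewrite (psi_W _ Wx).1 (psi_W _ Wx).2.
Qed.

End GDrazin.
End Index.

Theorem proposition3p4 (k : fieldType) (V : lmodType k)
  (phi : {linear V -> V}) (r : nat) :
  finite_potent phi -> is_index phi r ->
  forall psi : {linear V -> V},
    G_Drazin_inverse phi psi r <->
    [/\ stable_under psi (W_ phi), stable_under psi (U_ phi),
        (* psi|_W = (phi|_W)^{-1} *)
        (forall w, W_ phi w -> phi (psi w) = w /\ psi (phi w) = w) &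
        (* psi|_U is a generalized inverse of phi|_U *)
        (forall u, U_ phi u -> phi (psi (phi u)) = phi u)].
Proof.
(* Stability of [W_ phi] is implied: [phi] maps [W_ phi] onto itself and
   [psi (phi w) = w] there. *)
move=> phi_fp phi_index psi; split=> [GD | [_ psi_U psi_W psi_ginvU]].
  split.
  - exact: (G_Drazin_stable_W phi_fp phi_index GD).
  - exact: (G_Drazin_stable_U phi_index GD).
  - exact: (G_Drazin_inverse_W phi_fp phi_index GD).
  - by move=> u _; apply: GD.1.
exact: (G_Drazin_inverse_from_restrictions phi_fp phi_index
          psi_U psi_W psi_ginvU).
Qed.
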